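(* Let $R$ be a commutative ring with unit and let $f,g\in R[q]$ be monic polynomials with $f\Rightarrow_R g$. Then the homomorphism $\rho^R_{(fg),(f)}\colon R[q]^{(fg)}\to R[q]^{(f)}$ induced by the identity of $R[q]$ is injective.
   Context: $q$ is an indeterminate. For an element $h\in R[q]$, $R[q]^{(h)}=\varprojlim_j R[q]/(h)^j$ is the $(h)$-adic completion. For monic $f,g\in R[q]$ write $f\Rightarrow_R g$ if there exist an ideal $I\subset R$ with $\bigcap_{j\ge0}I^j=(0)$ and an integer $m\ge0$ such that $f^m\in(g)+I[q]$. *)

From HB Require Import structures.
From mathcomp Require Import all_boot all_order all_algebra.
Set Implicit Arguments. Unset Strict Implicit. Unset Printing Implicit Defensive.
Import GRing.Theory.
Local Open Scope ring_scope.

Section Defs.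
Variable R : comNzRingType.

Definition is_ideal (I : R -> Prop) : Prop :=
  [/\ I 0, (forall x y, I x -> I y -> I (x + y)) & (forall r x, I x -> I (r * x))].

(** [ipow I j x] : x belongs to I^j, the additive span of products of j
    elements of I (I^0 = R). *)
Inductive ipow (I : R -> Prop) : nat -> R -> Prop :=
| ipow_O x : ipow I 0 x
| ipow_mul j a b : ipow I j a -> I b -> ipow I j.+1 (a * b)
| ipow_zero j : ipow I j.+1 0
| ipow_add j x y : ipow I j.+1 x -> ipow I j.+1 y -> ipow I j.+1 (x + y).

Definition implies_R (f g : {poly R}) : Prop :=
  exists (I : R -> Prop) (m : nat),
    [/\ is_ideal I,
        (forall x, (forall j, ipow I j x) -> x = 0) &
        exists r h : {poly R}, f ^+ m = r * g + h /\ forall i, I h`_i].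

Definition pcong (h : {poly R}) (j : nat) (p p' : {poly R}) : Prop :=
  exists r : {poly R}, p - p' = r * h ^+ j.

(** Elements of the (h)-adic completion R[q]^(h) = lim_j R[q]/(h)^j are
    represented by compatible sequences of representatives x j of the
    classes in R[q]/(h)^j; two such sequences define the same element iff
    they agree modulo (h)^j for every j. *)
Definition adic_compatible (h : {poly R}) (x : nat -> {poly R}) : Prop :=
  forall j, pcong h j (x j.+1) (x j).

Definition adic_eq (h : {poly R}) (x y : nat -> {poly R}) : Prop :=
  forall j, pcong h j (x j) (y j).

(** rho_{(fg),(f)} sends the class of a compatible sequence (x j) to the
    class of the same sequence (reduced mod f^j, well defined since
    (fg)^j ⊆ (f)^j).  Injectivity of rho. *)
Definition rho_injective (f g : {poly R}) : Prop :=
  forall x y : nat -> {poly R},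
    adic_compatible (f * g) x -> adic_compatible (f * g) y ->
    adic_eq f x y -> adic_eq (f * g) x y.

End Defs.

(* Write H = (fg)^j and let I be the ideal with f^m in (g) + I[q].  Then
   f^(m+1) lies in (fg) + I[q], hence f^((m+1)j) in H + I[q], hence
   f^((m+1)jn) in H + I^n[q] for every n.  If x and y agree modulo every
   power of f, then x_j - y_j = (x_K - y_K) + (a multiple of H) for
   K = j + (m+1)jn, and x_K - y_K is a multiple of f^K, so x_j - y_j lies in
   H + I^n[q] for every n.  As H is monic, division by H is R-linear, so the
   remainder of x_j - y_j has all its coefficients in the intersection of the
   I^n, which is 0. *)
From mathcomp Require Import all_boot all_order all_algebra.
From mathcomp Require Import ring.
Set Implicit Arguments. Unset Strict Implicit.
Import GRing.Theory Pdiv.Ring Pdiv.RingMonic.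
Local Open Scope ring_scope.

Section IdealPowers.
Variables (R : comNzRingType) (I : R -> Prop).

Lemma ipow0 n : ipow I n 0.
Proof. by case: n => [|n]; [exact: ipow_O | exact: ipow_zero]. Qed.

Lemma ipowD n x y : ipow I n x -> ipow I n y -> ipow I n (x + y).
Proof. by case: n => [|n] ? ?; [exact: ipow_O | exact: ipow_add]. Qed.

Lemma ipow_sum n (J : Type) (s : seq J) (F : J -> R) :
  (forall i, ipow I n (F i)) -> ipow I n (\sum_(i <- s) F i).
Proof. by move=> IF; elim/big_ind: _ => //; [exact: ipow0 | exact: ipowD]. Qed.

Lemma ipowMl n r x : ipow I n x -> ipow I n (r * x).
Proof.
elim=> [z | j a b _ IHa Ib | j | j u v _ IHu _ IHv].
- exact: ipow_O.
- by rewrite mulrA; apply: ipow_mul.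
- by rewrite mulr0; apply: ipow_zero.
- by rewrite mulrDr; apply: ipow_add.
Qed.

Lemma ipowMr n r x : ipow I n x -> ipow I n (x * r).
Proof. by rewrite mulrC; apply: ipowMl. Qed.

Lemma ipowM m n a b : ipow I m a -> ipow I n b -> ipow I (m + n) (a * b).
Proof.
move=> Ia; elim=> [z | k c d _ IHc Id | k | k u v _ IHu _ IHv].
- by rewrite addn0; apply: ipowMr.
- by rewrite mulrA addnS; apply: ipow_mul.
- by rewrite mulr0; apply: ipow0.
- by rewrite mulrDr; apply: ipowD.
Qed.

Lemma ipow1 x : I x -> ipow I 1 x.
Proof. by move=> Ix; rewrite -[x]mul1r; apply: ipow_mul (ipow_O I 1) Ix. Qed.

Definition poly_ipow n (p : {poly R}) := forall i, ipow I n p`_i.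

Lemma poly_ipow0 n : poly_ipow n 0.
Proof. by move=> i; rewrite coef0; apply: ipow0. Qed.

Lemma poly_ipowD n p q : poly_ipow n p -> poly_ipow n q -> poly_ipow n (p + q).
Proof. by move=> Ip Iq i; rewrite coefD; apply: ipowD. Qed.

Lemma poly_ipowMl n p q : poly_ipow n q -> poly_ipow n (p * q).
Proof. by move=> Iq i; rewrite coefM; apply: ipow_sum => k; apply: ipowMl. Qed.

Lemma poly_ipowMr n p q : poly_ipow n p -> poly_ipow n (p * q).
Proof. by rewrite mulrC; apply: poly_ipowMl. Qed.

Lemma poly_ipowM m n p q :
  poly_ipow m p -> poly_ipow n q -> poly_ipow (m + n) (p * q).
Proof. by move=> Ip Iq i; rewrite coefM; apply: ipow_sum => k; apply: ipowM. Qed.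

Lemma poly_ipow_rmodp n p h : h \is monic -> poly_ipow n p -> poly_ipow n (rmodp p h).
Proof.
move=> mh Ip i; rewrite -(coefK p) poly_def rmodp_sum // coef_sum.
by apply: ipow_sum => k; rewrite rmodpZ // coefZ; apply: ipowMr.
Qed.

Definition dvdp_ipow n (h p : {poly R}) :=
  exists a w, p = a * h + w /\ poly_ipow n w.

Lemma dvdp_ipowDl n h r p : dvdp_ipow n h p -> dvdp_ipow n h (r * h + p).
Proof.
by move=> [a [w [-> Iw]]]; exists (r + a), w; split; first by rewrite addrA mulrDl.
Qed.

Lemma dvdp_ipowMl n h r p : dvdp_ipow n h p -> dvdp_ipow n h (r * p).
Proof.
move=> [a [w [-> Iw]]]; exists (r * a), (r * w).
by split; [ring | apply: poly_ipowMl].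
Qed.

Lemma dvdp_ipow_mul2l n f h p : dvdp_ipow n h p -> dvdp_ipow n (f * h) (f * p).
Proof.
move=> [a [w [-> Iw]]]; exists a, (f * w).
by split; [ring | apply: poly_ipowMl].
Qed.

Lemma dvdp_ipowM m n h p q :
  dvdp_ipow m h p -> dvdp_ipow n h q -> dvdp_ipow (m + n) h (p * q).
Proof.
move=> [a [w [-> Iw]]] [b [v [-> Iv]]].
exists (a * (b * h + v) + w * b), (w * v).
by split; [ring | apply: poly_ipowM].
Qed.

Lemma dvdp_ipowX n h p k : dvdp_ipow n h p -> dvdp_ipow (n * k) h (p ^+ k).
Proof.
move=> Ip; elim: k => [|k IHk].
  by rewrite muln0; exists 0, 1; split; [rewrite mul0r add0r | move=> i; apply: ipow_O].
by rewrite exprS mulnS; apply: dvdp_ipowM.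
Qed.

Lemma dvdp_ipow_exp n h p k : dvdp_ipow n h p -> dvdp_ipow n (h ^+ k) (p ^+ k).
Proof.
move=> [a [w [-> Iw]]]; elim: k => [|k [b [v [IHk Iv]]]].
  by exists 1, 0; split; [rewrite !expr0 mul1r addr0 | apply: poly_ipow0].
exists (b * a), (b * h ^+ k * w + v * (a * h + w)); split.
  by rewrite exprS IHk exprS; ring.
by apply: poly_ipowD; [apply: poly_ipowMl | apply: poly_ipowMr].
Qed.

Lemma dvdp_of_ipow h p :
  h \is monic -> (forall x, (forall n, ipow I n x) -> x = 0) ->
  (forall n, dvdp_ipow n h p) -> exists r, p = r * h.
Proof.
move=> mh sepI Ip; exists (rdivp p h).
suff rmod0 : rmodp p h = 0 by rewrite {1}(rdivp_eq mh p) rmod0 addr0.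
apply/polyP => i; rewrite coef0; apply: sepI => n.
have [a [w [-> Iw]]] := Ip n.
by rewrite rmodpD // rmodp_mull // add0r; apply: poly_ipow_rmodp.
Qed.

End IdealPowers.

Lemma adic_compatible_pcong (R : comNzRingType) (h : {poly R}) x j k :
  adic_compatible h x -> (j <= k)%N -> pcong h j (x k) (x j).
Proof.
move=> cx; elim: k => [|k IHk] ljk.
  by move: ljk; rewrite leqn0 => /eqP ->; exists 0; rewrite subrr mul0r.
rewrite leq_eqVlt ltnS in ljk; case/orP: ljk => [/eqP -> | ljk].
  by exists 0; rewrite subrr mul0r.
have [a xa] := IHk ljk; have [b xb] := cx k.
exists (b * h ^+ (k - j) + a).
by rewrite -(subrK (x k) (x k.+1)) -addrA xa xb mulrDl -mulrA -exprD subnK.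
Qed.

Lemma expr_dvdp_ipow (R : comNzRingType) (I : R -> Prop) (f g r e : {poly R}) m :
  f ^+ m = r * g + e -> (forall i, I e`_i) ->
  forall j n, dvdp_ipow I n ((f * g) ^+ j) (f ^+ (m.+1 * j * n)).
Proof.
move=> fmE Ie j n.
have fg1 : dvdp_ipow I 1 (f * g) (f ^+ m.+1).
  rewrite exprS; apply: dvdp_ipow_mul2l; rewrite fmE.
  by exists r, e; split => // i; apply: ipow1.
rewrite exprM -[n in dvdp_ipow I n]mul1n; apply: dvdp_ipowX.
by rewrite exprM; apply: dvdp_ipow_exp.
Qed.

Theorem proposition3p2 (R : comNzRingType) (f g : {poly R}) :
  f \is monic -> g \is monic -> implies_R f g -> rho_injective f g.
Proof.
move=> mf mg [I [m [_ sepI [r [e [fmE Ie]]]]]] x y cx cy exy j.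
have mH : (f * g) ^+ j \is monic by apply: monic_exp; rewrite monicMl.
apply: (dvdp_of_ipow mH sepI) => n.
set K := (j + m.+1 * j * n)%N.
have [a xa] := adic_compatible_pcong cx (leq_addr (m.+1 * j * n) j).
have [b yb] := adic_compatible_pcong cy (leq_addr (m.+1 * j * n) j).
have [c xyc] := exy K.
have -> : x j - y j = (b - a) * (f * g) ^+ j + (x K - y K).
  by rewrite mulrBl -xa -yb; ring.
apply: dvdp_ipowDl; rewrite xyc exprD mulrA.
by apply: dvdp_ipowMl; apply: (expr_dvdp_ipow fmE Ie).
Qed.
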